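(* Let $X$ be a finite set and let $c$ be a choice correspondence on $X$ satisfying: (Condition 1) for all $x,y\in X$ and menus $A\subset B$, if $x,y\in A$, $x\in c(A)$ and $y\in c(B)$, then $x\in c(B)$; and (Condition 3) for every menu $A$ with at least two elements there exists $x\in A$ with $x\notin c(A)$. Then $c$ satisfies No Binary Cycles: for all $x,y,z\in X$, if $x\in c(\{x,y\})$ and $y\in c(\{y,z\})$, then $x\in c(\{x,z\})$.
   Context: A menu is a nonempty subset of $X$. A choice correspondence is a map $c$ assigning to each menu $A$ a nonempty subset $c(A)\subseteq A$. *)

From mathcomp Require Import all_boot.
Set Implicit Arguments. Unset Strict Implicit. Unset Printing Implicit Defensive.

(* A menu is a nonempty subset of X; a choice correspondence assigns to each
   menu A a nonempty subset c A of A.  Values of c on set0 are irrelevant. *)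
Definition choice_correspondence (X : finType) (c : {set X} -> {set X}) : Prop :=
  forall A : {set X}, A != set0 -> c A \subset A /\ c A != set0.

Definition condition1 (X : finType) (c : {set X} -> {set X}) : Prop :=
  forall (x y : X) (A B : {set X}), A != set0 -> A \subset B ->
    x \in A -> y \in A -> x \in c A -> y \in c B -> x \in c B.

Definition condition3 (X : finType) (c : {set X} -> {set X}) : Prop :=
  forall A : {set X}, 2 <= #|A| -> exists2 x, x \in A & x \notin c A.

Definition no_binary_cycles (X : finType) (c : {set X} -> {set X}) : Prop :=
  forall x y z : X, x \in c [set x; y] -> y \in c [set y; z] -> x \in c [set x; z].

From mathcomp Require Import all_boot.
Set Implicit Arguments. Unset Strict Implicit. Unset Printing Implicit Defensive.

(* Suppose x is chosen from {x, y} and y from {y, z}, but x is not chosen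
   from {x, z}, so that z is.  On the menu B = {x, y, z}, Condition 1 lets
   choice propagate along the cycle y -> x -> z -> y, so the nonempty set
   c(B) must be all of B, which Condition 3 forbids as soon as x <> y. *)

Section BinaryCycles.

Variables (X : finType) (c : {set X} -> {set X}).

Lemma set2_neq0 (a b : X) : [set a; b] != set0.
Proof. by apply/set0Pn; exists a; rewrite !inE eqxx. Qed.

Lemma choice_set2 (a b : X) :
  choice_correspondence c -> (a \in c [set a; b]) || (b \in c [set a; b]).
Proof.
move=> cc; have [sub /set0Pn[w w_c]] := cc _ (set2_neq0 a b).
by move: (subsetP sub w w_c); rewrite !inE => /orP[] /eqP Ew; subst w; rewrite w_c ?orbT.
Qed.

Lemma condition1_set2 (a b : X) (B : {set X}) :
  condition1 c -> a \in B -> b \in B ->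
  a \in c [set a; b] -> b \in c B -> a \in c B.
Proof.
move=> c1 aB bB; apply: c1; rewrite ?set2_neq0 ?inE ?eqxx ?orbT //.
by rewrite subUset !sub1set aB bB.
Qed.

Lemma condition3_card (B : {set X}) : condition3 c -> c B = B -> #|B| <= 1.
Proof. by move=> c3 cB; rewrite leqNgt; apply/negP => /c3[x xB]; rewrite cB xB. Qed.

End BinaryCycles.

Lemma set3_cycle_closed (T : finType) (x y z : T) (S : {set T}) :
  S \subset [set x; y; z] -> S != set0 ->
  (y \in S -> x \in S) -> (z \in S -> y \in S) -> (x \in S -> z \in S) ->
  S = [set x; y; z].
Proof.
move=> sS /set0Pn[w wS] yx zy xz.
have xS : x \in S.
  by move: (subsetP sS w wS); rewrite !inE -orbA => /or3P[] /eqP Ew; subst w; auto.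
apply/eqP; rewrite eqEsubset sS; apply/subsetP => v.
by rewrite !inE -orbA => /or3P[] /eqP ->; auto.
Qed.

Theorem lemma4 (X : finType) (c : {set X} -> {set X}) :
  choice_correspondence c -> condition1 c -> condition3 c -> no_binary_cycles c.
Proof.
move=> cc c1 c3 x y z xy yz.
have [-> // | nxy] := eqVneq x y.
apply: contraT => xNxz.
have zxz : z \in c [set z; x].
  by rewrite setUC; move: (choice_set2 x z cc); rewrite (negbTE xNxz).
set B := [set x; y; z].
have [xB yB zB] : [/\ x \in B, y \in B & z \in B] by rewrite !inE !eqxx !orbT.
have neB : B != set0 by apply/set0Pn; exists x.
have cB : c B = B.
  have [subB cB_neq0] := cc B neB.
  apply: set3_cycle_closed => //.
  - exact: condition1_set2 c1 xB yB xy.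
  - exact: condition1_set2 c1 yB zB yz.
  - exact: condition1_set2 c1 zB xB zxz.
have sub_xy : [set x; y] \subset B by rewrite subUset !sub1set xB yB.
have := subset_leq_card sub_xy; rewrite cards2 nxy.
by rewrite ltnNge (condition3_card c3 cB).
Qed.
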